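(* For any metrized graph $\Gamma$ with $v \geq 4$ vertices, $$(v-1)\,y(\Gamma) \leq Kf(\Gamma) \leq \frac{v^2-3v+4}{2}\, y(\Gamma).$$
   Context: A metrized graph $\Gamma$ is a finite connected graph (multiple edges and self-loops allowed) each of whose edges is identified with a closed segment of positive length, with a finite nonempty vertex set $V(\Gamma)$ containing every point of valence $\neq2$; $v=\#V(\Gamma)$, $E(\Gamma)$ its edge set, $L_i$ the length of $e_i$, $r(x,y)$ the effective resistance (edges as resistors of resistance equal to length). $Kf(\Gamma)=\frac12\sum_{p,q\in V(\Gamma)}r(p,q)$. For an edge $e_i$ with end points $p_i,q_i$: if $\Gamma-e_i$ (interior deleted) is connected, $R_i$ is the effective resistance between $p_i,q_i$ in $\Gamma-e_i$, $R_{a_i,p}=\hat j_{p_i}(p,q_i)$, $R_{b_i,p}=\hat j_{q_i}(p,p_i)$ with $\hat j_z(x,y)$ the voltage function of $\Gamma-e_i$ (potential at $x$ when unit current enters at $y$, exits at $z$, potential $0$ at $z$); if $e_i$ is a bridge, $R_{a_i,p}=0,R_{b_i,p}=R_i$ for $p$ in the component of $\Gamma-e_i$ containing $p_i$ and $R_{a_i,p}=R_i,R_{b_i,p}=0$ otherwise, expressions in $R_i$ being interpreted as limits as $R_i\to\infty$; for a self-loop $R_i=0$. For a fixed vertex $p$ (independent of choice), $y(\Gamma)=\frac14\sum_{e_i}\frac{L_iR_i^2}{(L_i+R_i)^2}+\frac34\sum_{e_i}\frac{L_i(R_{a_i,p}-R_{b_i,p})^2}{(L_i+R_i)^2}$.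 *)

From HB Require Import structures.
From mathcomp Require Import all_boot all_order all_algebra.
From mathcomp Require Import reals.
Set Implicit Arguments. Unset Strict Implicit. Unset Printing Implicit Defensive.
Import Order.TTheory GRing.Theory Num.Theory.
Local Open Scope ring_scope.

(* A metrized graph with vertex set 'I_n and edges 'I_m: edge k has end
   points pe k, qe k (possibly equal: self-loop) and length L k > 0.
   Sub-graphs obtained by deleting (interiors of) edges are described by a
   predicate [keep : 'I_m -> bool] selecting the retained edges. *)

Section MetrizedGraph.
Variables (R : realType) (n m : nat).
Variables (pe qe : 'I_m -> 'I_n) (L : 'I_m -> R).

Definition adjG (keep : 'I_m -> bool) : rel 'I_n :=
  fun x y => [exists k, keep k &&
     (((pe k == x) && (qe k == y)) || ((pe k == y) && (qe k == x)))].

Definition connectedG (keep : 'I_m -> bool) : bool :=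
  [forall x : 'I_n, [forall y : 'I_n, connect (adjG keep) x y]].

(* weighted Laplacian, conductance 1/L k on edge k (self-loops contribute 0) *)
Definition laplacian (keep : 'I_m -> bool) : 'M[R]_n :=
  \matrix_(i, j) \sum_(k | keep k)
     (L k)^-1 * (((pe k == i)%:R - (qe k == i)%:R) *
                 ((pe k == j)%:R - (qe k == j)%:R)).

Definition grounded_lap (keep : 'I_m -> bool) (z : 'I_n) : 'M[R]_n :=
  \matrix_(i, j) if (i == z) || (j == z) then (i == j)%:R
                 else laplacian keep i j.

(* potential vector when unit current enters at y and exits at z,
   potential 0 at z (Kirchhoff's laws at every vertex other than z) *)
Definition voltage (keep : 'I_m -> bool) (z y : 'I_n) : 'cV[R]_n :=
  invmx (grounded_lap keep z) *m
    \col_i ((i != z) && (i == y))%:R.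

Definition jhat (keep : 'I_m -> bool) (z x y : 'I_n) : R :=
  voltage keep z y x ord0.

Definition resistance (keep : 'I_m -> bool) (x y : 'I_n) : R :=
  jhat keep y x x.

Definition allE : 'I_m -> bool := fun _ => true.
Definition minus_edge (k : 'I_m) : 'I_m -> bool := fun j => j != k.

Definition Kf : R :=
  2^-1 * \sum_(x : 'I_n) \sum_(y : 'I_n) resistance allE x y.

(* contribution of edge k to y(Gamma), with base vertex p.
   If Gamma - e_k is disconnected (bridge), the value is the limit
   R_k -> oo of the expression, namely L_k/4 + 3 L_k/4 = L_k. *)
Definition yterm (p : 'I_n) (k : 'I_m) : R :=
  if connectedG (minus_edge k) then
    let Rk := resistance (minus_edge k) (pe k) (qe k) in
    let Ra := jhat (minus_edge k) (pe k) p (qe k) in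
    let Rb := jhat (minus_edge k) (qe k) p (pe k) in
    4^-1 * (L k * Rk ^+ 2 / (L k + Rk) ^+ 2)
      + 3 / 4 * (L k * (Ra - Rb) ^+ 2 / (L k + Rk) ^+ 2)
  else L k.

Definition yG (p : 'I_n) : R := \sum_(k : 'I_m) yterm p k.

End MetrizedGraph.

From HB Require Import structures.
From mathcomp Require Import all_boot all_order all_algebra.
From mathcomp Require Import reals.
From mathcomp Require Import ring lra.
Set Implicit Arguments. Unset Strict Implicit. Unset Printing Implicit Defensive.
Import Order.TTheory GRing.Theory Num.Theory.
Local Open Scope ring_scope.

(* Fix the ground p and let V_k be the potential of a unit current entering
   at the end point p_k of e_k and leaving at q_k; write g_k = V_k - c_k, with
   c_k the average of V_k over the two end points, and rho_k half the drop of
   V_k along e_k.  Then r(x, y) = sum_k (V_k x - V_k y)^2 / L_k, hence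
   Kf = sum_k (n sum_x g_k^2 - (sum_x g_k)^2) / L_k.  Solving the circuit of
   Gamma - e_k (bridge or not) shows that the k-th term of y(Gamma) is
   (rho_k^2 + 3 g_k(p)^2) / L_k, and an energy identity shows that
   sum_k g_k(x)^2 / L_k does not depend on x, so the g_k(p)^2 may be replaced
   by their averages over the vertices.  By the maximum principle
   |g_k| <= rho_k, with values rho_k and -rho_k at the two end points, and the
   theorem follows edge by edge from an elementary inequality for
   n sum g^2 - (sum g)^2, proved with Cauchy-Schwarz away from those two
   end points. *)

Section SquareSums.
Variables (R : realFieldType) (T : finType).

Lemma sum_sqr_diff (A : {pred T}) (f : T -> R) :
  \sum_(i in A) \sum_(j in A) (f i - f j) ^+ 2 =
  2 * (#|A|%:R * \sum_(i in A) f i ^+ 2 - (\sum_(i in A) f i) ^+ 2).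
Proof.
have expand i : \sum_(j in A) (f i - f j) ^+ 2 =
    #|A|%:R * f i ^+ 2 - 2 * f i * \sum_(j in A) f j + \sum_(j in A) f j ^+ 2.
  rewrite (eq_bigr (fun j => f i ^+ 2 - 2 * f i * f j + f j ^+ 2)); last first.
    by move=> j _; ring.
  by rewrite big_split sumrB /= sumr_const -[_ *+ #|A|]mulr_natl -big_distrr.
under eq_bigr do rewrite expand.
rewrite big_split sumrB /= -big_distrr -big_distrl /= -big_distrr /= sumr_const.
by rewrite -[_ *+ #|A|]mulr_natl; ring.
Qed.

Lemma sqr_sum_le_card (A : {pred T}) (f : T -> R) :
  (\sum_(i in A) f i) ^+ 2 <= #|A|%:R * \sum_(i in A) f i ^+ 2.
Proof.
rewrite -subr_ge0 -(pmulr_rge0 _ (ltr0Sn R 1)) -sum_sqr_diff.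
by do 2!apply: sumr_ge0 => ? _; apply: sqr_ge0.
Qed.

Lemma variance_bounds_num (N rho A B : R) :
  4 <= N -> 0 <= A <= N * rho ^+ 2 -> B ^+ 2 <= (N - 2) * (A - 2 * rho ^+ 2) ->
  (N - 1) * (rho ^+ 2 + 3 / N * A) <= N * A - B ^+ 2 /\
  N * A - B ^+ 2 <= (N ^+ 2 - 3 * N + 4) / 2 * (rho ^+ 2 + 3 / N * A).
Proof.
move=> N4 /andP [A0 AN] HB.
have N0 : 0 < N by lra.
have rho0 : 0 <= N * rho ^+ 2 by lra.
have -> : rho ^+ 2 + 3 / N * A = (N * rho ^+ 2 + 3 * A) / N.
  by field; rewrite gt_eqF.
split.
  rewrite mulrA ler_pdivrMr //.
  (* with the bound on B^2 the claim becomes (N - 3)(N rho^2 - A) >= 0 *)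
  nra.
rewrite mulf_div ler_pdivlMr ?mulr_gt0 //.
have B0 : 0 <= B ^+ 2 := sqr_ge0 B.
(* the slack is (N^2 - 9N + 12) A + (N^2 - 3N + 4) N rho^2 + 2N B^2; where the
   first coefficient is negative, A <= N rho^2 leaves 2(N - 2)(N - 4) N rho^2 *)
have [c0|c0] := lerP 0 (N ^+ 2 - 9 * N + 12).
  have : 0 <= (N ^+ 2 - 9 * N + 12) * A by apply: mulr_ge0.
  nra.
have : 0 <= (N ^+ 2 - 9 * N + 12) * (A - N * rho ^+ 2) by apply: mulr_le0; lra.
have : 0 <= (N - 2) * (N - 4) * (N * rho ^+ 2) by apply: mulr_ge0 => //; apply: mulr_ge0; lra.
nra.
Qed.

Lemma variance_bounds (g : T -> R) (rho : R) : (4 <= #|T|)%N ->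
  (forall x, `|g x| <= rho) ->
  (exists i j, [/\ i != j, g i = rho & g j = - rho]) \/ rho = 0 ->
  (#|T|%:R - 1) * (rho ^+ 2 + 3 / #|T|%:R * \sum_x g x ^+ 2)
    <= #|T|%:R * \sum_x g x ^+ 2 - (\sum_x g x) ^+ 2 /\
  #|T|%:R * \sum_x g x ^+ 2 - (\sum_x g x) ^+ 2
    <= (#|T|%:R ^+ 2 - 3 * #|T|%:R + 4) / 2 * (rho ^+ 2 + 3 / #|T|%:R * \sum_x g x ^+ 2).
Proof.
move=> T4 g_le rho_attained; apply: variance_bounds_num; first by rewrite ler_nat.
  rewrite sumr_ge0 => [|x _]; last exact: sqr_ge0.
  rewrite mulr_natl -sumr_const ler_sum // => x _.
  by have := g_le x; rewrite ler_norml => /andP [? ?]; nra.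
case: rho_attained => [[i [j [ij gi gj]]] | rho0]; last first.
  have g0 x : g x = 0 by apply/normr0_eq0/eqP; rewrite eq_le normr_ge0 -rho0 g_le.
  have sq0 : \sum_x g x ^+ 2 = 0 by rewrite big1 // => x _; rewrite g0 expr0n.
  by rewrite sq0 big1 // rho0 expr0n /= mulr0 subrr mulr0.
set P := [pred x | (x != i) && (x != j)].
have split_ij (f : T -> R) : \sum_x f x = f i + f j + \sum_(x in P) f x.
  rewrite (bigD1 i) //= (bigD1 j) /=; last by rewrite eq_sym.
  by rewrite addrA; congr (_ + _); apply: eq_bigl => x; rewrite andbC.
have cardP : #|P|%:R = #|T|%:R - 2 :> R.
  have := split_ij (fun _ => 1); rewrite !sumr_const => ->; ring.
rewrite (split_ij g) (split_ij (fun x => g x ^+ 2)) /= gi gj.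
rewrite (_ : rho + - rho = 0) ?add0r; last by ring.
rewrite -cardP (_ : _ ^+ 2 + _ ^+ 2 + _ - _ = \sum_(x in P) g x ^+ 2); last by ring.
exact: sqr_sum_le_card.
Qed.

End SquareSums.

Section Laplacian.
Variables (R : realType) (n m : nat) (pe qe : 'I_m -> 'I_n) (L : 'I_m -> R).
Hypothesis L_gt0 : forall k, 0 < L k.

Local Notation adj := (adjG pe qe).
Local Notation connected := (connectedG pe qe).

Definition dipole (a b i : 'I_n) : R := (i == a)%:R - (i == b)%:R.
Definition grad (f : 'I_n -> R) k := f (pe k) - f (qe k).
Definition lapf keep (f : 'I_n -> R) i := \sum_j laplacian pe qe L keep i j * f j.
Definition dirichlet keep (f g : 'I_n -> R) :=
  \sum_(k | keep k) (L k)^-1 * grad f k * grad g k.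

Lemma sum_delta a (f : 'I_n -> R) : \sum_i (i == a)%:R * f i = f a.
Proof.
rewrite (bigD1 a) //= eqxx mul1r big1 ?addr0 // => i /negPf ->.
exact: mul0r.
Qed.

Lemma sum_dipole a b (f : 'I_n -> R) : \sum_i dipole a b i * f i = f a - f b.
Proof.
by under eq_bigr do rewrite mulrBl; rewrite sumrB !sum_delta.
Qed.

Lemma lapfE keep f i :
  lapf keep f i = \sum_(k | keep k) (L k)^-1 * dipole (pe k) (qe k) i * grad f k.
Proof.
rewrite /lapf; under eq_bigr do rewrite mxE big_distrl /=.
rewrite exchange_big; apply: eq_bigr => k _ /=.
rewrite /grad -sum_dipole big_distrr; apply: eq_bigr => j _ /=.
by rewrite /dipole !(eq_sym i) !(eq_sym j); ring.
Qed.

Lemma eq_lapf keep f g i : f =1 g -> lapf keep f i = lapf keep g i.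
Proof. by move=> eq_fg; apply: eq_bigr => j _; rewrite eq_fg. Qed.

Lemma lapfD keep f g i :
  lapf keep (fun j => f j + g j) i = lapf keep f i + lapf keep g i.
Proof. by rewrite /lapf -big_split; apply: eq_bigr => j _; rewrite mulrDr. Qed.

Lemma lapfZ keep c f i : lapf keep (fun j => c * f j) i = c * lapf keep f i.
Proof. by rewrite /lapf big_distrr; apply: eq_bigr => j _; rewrite mulrCA. Qed.

Lemma lapfB keep f g i :
  lapf keep (fun j => f j - g j) i = lapf keep f i - lapf keep g i.
Proof.
rewrite -mulN1r -lapfZ -lapfD; apply: eq_bigr => j _; congr (_ * _); ring.
Qed.

Lemma sum_mul_lapf keep f g : \sum_i g i * lapf keep f i = dirichlet keep f g.
Proof.
under eq_bigr do rewrite lapfE big_distrr.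
rewrite exchange_big; apply: eq_bigr => k _ /=.
rewrite [grad g k]/grad -sum_dipole big_distrr; apply: eq_bigr => i _ /=; ring.
Qed.

Lemma dirichletC keep f g : dirichlet keep f g = dirichlet keep g f.
Proof. by apply: eq_bigr => k _; ring. Qed.

Lemma dirichlet_dipole keep f a b g :
  (forall i, lapf keep f i = dipole a b i) -> dirichlet keep f g = g a - g b.
Proof.
move=> lap_f; rewrite -sum_mul_lapf -sum_dipole.
by apply: eq_bigr => i _; rewrite lap_f mulrC.
Qed.

Lemma sum_lapf keep f : \sum_i lapf keep f i = 0.
Proof.
rewrite -(eq_bigr _ (fun i _ => mul1r _)) sum_mul_lapf.
by rewrite /dirichlet big1 // => k _; rewrite /grad subrr mulr0.
Qed.

Lemma adjG_sym keep : symmetric (adj keep).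
Proof.
by move=> x y; apply/existsP/existsP => -[k /andP [kk xy]]; exists k;
  rewrite kk orbC.
Qed.

Lemma connectedG_closed keep (a : {pred 'I_n}) : connected keep ->
  (forall x y, adj keep x y -> x \in a -> y \in a) ->
  forall x y, x \in a -> y \in a.
Proof.
move=> /forallP conn cl_a x y.
have sym := sym_connect_sym (@adjG_sym keep).
by rewrite (closed_connect (intro_closed sym cl_a) (forallP (conn x) y)).
Qed.

Lemma connectedG_edge_const (T : eqType) keep (f : 'I_n -> T) : connected keep ->
  (forall k, keep k -> f (pe k) = f (qe k)) -> forall x y, f x = f y.
Proof.
move=> conn f_edge x y; apply/esym/eqP.
have := connectedG_closed (a := [pred y | f y == f x]) conn; apply; last first.
  by rewrite inE.
by move=> u v /existsP [k /andP [kk /orP [] /andP [/eqP <- /eqP <-]]];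
  rewrite !inE f_edge.
Qed.

Lemma dirichlet_term_ge0 f k : 0 <= (L k)^-1 * grad f k * grad f k.
Proof. by rewrite -mulrA -expr2 mulr_ge0 ?sqr_ge0 // invr_ge0 ltW. Qed.

Lemma dirichlet_ge0 keep f : 0 <= dirichlet keep f f.
Proof. by apply: sumr_ge0 => k _; apply: dirichlet_term_ge0. Qed.

Lemma dirichlet_eq0 keep f : dirichlet keep f f = 0 ->
  forall k, keep k -> f (pe k) = f (qe k).
Proof.
move=> /(psumr_eq0P (fun k _ => dirichlet_term_ge0 f k)) energy0 k /energy0.
move/eqP; rewrite -mulrA mulf_eq0 invr_eq0 gt_eqF //= -expr2 sqrf_eq0 subr_eq0.
by move/eqP.
Qed.

Lemma lapf_inj keep f g : connected keep ->
  (forall i, lapf keep f i = lapf keep g i) -> forall x y, f x - f y = g x - g y.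
Proof.
move=> conn lap_fg x y.
pose h j := f j - g j.
suff : h x = h y by rewrite /h; lra.
apply: (connectedG_edge_const conn) => k kk.
apply: dirichlet_eq0 kk; rewrite -sum_mul_lapf big1 // => i _.
by rewrite lapfB lap_fg subrr mulr0.
Qed.

Lemma laplacian_sym keep i j :
  laplacian pe qe L keep i j = laplacian pe qe L keep j i.
Proof. by rewrite !mxE; apply: eq_bigr => k _; ring. Qed.

Lemma grounded_lap_row keep z (u : 'I_n -> R) :
  \sum_j grounded_lap pe qe L keep z z j * u j = u z.
Proof.
by under eq_bigr do rewrite mxE eqxx /= eq_sym; apply: sum_delta.
Qed.

Lemma grounded_lap_unit keep z : connected keep ->
  grounded_lap pe qe L keep z \in unitmx.
Proof.
move=> conn; rewrite -row_free_unit; apply: inj_row_free => v vG0.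
pose f i := v ord0 i.
have col0 j : \sum_i f i * grounded_lap pe qe L keep z i j = 0.
  by have := congr1 (fun M : 'rV_n => M ord0 j) vG0; rewrite !mxE.
have fz : f z = 0.
  rewrite -(col0 z) -sum_delta; apply: eq_bigr => i _.
  by rewrite mxE eqxx orbT mulrC.
have lap0 j : j != z -> lapf keep f j = 0.
  move=> jz; rewrite -(col0 j); apply: eq_bigr => i _.
  rewrite [in RHS]mxE (negPf jz) orbF laplacian_sym mulrC.
  by case: eqP => [->|_]; rewrite ?fz ?mulr0 ?mul0r.
have energy0 : dirichlet keep f f = 0.
  rewrite -sum_mul_lapf big1 // => j _.
  by have [->|/lap0 ->] := eqVneq j z; rewrite ?fz ?mulr0 ?mul0r.
have f_const := connectedG_edge_const conn (dirichlet_eq0 energy0).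
by apply/rowP => i; rewrite mxE -[v ord0 i]/(f i) (f_const i z) fz.
Qed.

Definition volt keep z y i := jhat pe qe L keep z i y.

Lemma volt_ground keep z y : volt keep z y z = 0.
Proof.
rewrite /volt /jhat /voltage.
set G := grounded_lap pe qe L keep z.
set b := (\col_i ((i != z) && (i == y))%:R : 'cV_n).
have bz : b z ord0 = 0 by rewrite mxE eqxx.
have [G_unit|G_sing] := boolP (G \in unitmx).
  rewrite -[RHS]bz -[in RHS](mulKVmx G_unit b) [RHS]mxE.
  exact/esym/(grounded_lap_row keep z (fun j => (invmx G *m b) j ord0)).
by rewrite (invmx_out G_sing) mxE (grounded_lap_row keep z (fun j => b j ord0)).
Qed.

Lemma volt_self keep z i : volt keep z z i = 0.
Proof.
rewrite /volt /jhat /voltage.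
have -> : (\col_i ((i != z) && (i == z))%:R : 'cV[R]_n) = 0.
  by apply/colP => j; rewrite !mxE andNb.
by rewrite mulmx0 mxE.
Qed.

Lemma lapf_volt keep z y : connected keep ->
  forall i, lapf keep (volt keep z y) i = dipole y z i.
Proof.
move=> conn; set u := volt keep z y.
have G_unit := grounded_lap_unit z conn.
have off_z i : i != z -> lapf keep u i = dipole y z i.
  move=> iz; rewrite /dipole (negPf iz) subr0.
  have := congr1 (fun M : 'cV_n => M i ord0)
    (mulKVmx G_unit (\col_i ((i != z) && (i == y))%:R)).
  rewrite !mxE iz => <-; apply: eq_bigr => j _; rewrite [in RHS]mxE (negPf iz) /=.
  by case: eqP => [->|_] //; rewrite (negPf iz) mul0r /u volt_ground mulr0.
have sum0 : \sum_i (lapf keep u i - dipole y z i) = 0.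
  rewrite sumrB sum_lapf -(eq_bigr _ (fun i _ => mulr1 (dipole y z i))).
  by rewrite sum_dipole !subrr.
move=> i; have [->|/off_z //] := eqVneq i z; apply/eqP; rewrite -subr_eq0.
by move: sum0; rewrite (bigD1 z) //= big1 ?addr0 => [->|j /off_z ->] //; rewrite subrr.
Qed.

Lemma dipole_mul_grad k y u :
  dipole (pe k) (qe k) y * grad u k =
  (y == pe k)%:R * (u y - u (qe k)) + (y == qe k)%:R * (u y - u (pe k)).
Proof.
by rewrite /dipole /grad; do 2 case: eqP => [->|_] /=; ring.
Qed.

Lemma lapf_max_neighbor keep u y y' : (forall i, u i <= u y) ->
  lapf keep u y <= 0 -> adj keep y y' -> u y' = u y.
Proof.
move=> u_max lap_le0 /existsP [k /andP [kk yy']].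
have term_ge0 j : keep j -> 0 <= (L j)^-1 * dipole (pe j) (qe j) y * grad u j.
  move=> _; rewrite -mulrA dipole_mul_grad mulr_ge0 ?invr_ge0 ?(ltW (L_gt0 j)) //.
  by rewrite addr_ge0 // mulr_ge0 // subr_ge0.
have lap0 : lapf keep u y = 0.
  by apply/eqP; rewrite eq_le lap_le0 lapfE sumr_ge0.
move: lap0; rewrite lapfE => /(psumr_eq0P term_ge0)/(_ k kk)/eqP.
rewrite -mulrA dipole_mul_grad mulf_eq0 invr_eq0 gt_eqF //=.
by case/orP: yy' => /andP [/eqP <- /eqP <-]; rewrite eqxx subrr mulr0 ?addr0 ?add0r mul1r;
  rewrite subr_eq0 => /eqP.
Qed.

Lemma max_principle keep u a b : connected keep ->
  (forall i, lapf keep u i = dipole a b i) -> forall x, u x <= u a.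
Proof.
move=> conn lap_u x.
have [x0 _ x0_max] := @arg_maxP _ _ _ a xpredT u isT.
suff -> : u a = u x0 by apply: x0_max.
apply/eqP/negPn/negP => ua_ne.
suff : a \in [pred y | u y == u x0] by rewrite inE (negPf ua_ne).
apply: (@connectedG_closed keep _ conn _ x0); last by rewrite inE.
move=> y y' y_adj /eqP uy; rewrite inE.
rewrite (lapf_max_neighbor _ _ y_adj) ?uy // => [i|]; first exact: x0_max.
have ya : y != a by apply: contraNneq ua_ne => <-; rewrite uy.
by rewrite lap_u /dipole (negPf ya) sub0r oppr_le0.
Qed.

Lemma connectedG_minus_edge k : connected (@allE m) ->
  connect (adj (minus_edge k)) (pe k) (qe k) -> connected (minus_edge k).
Proof.
move=> conn pq_conn; apply/forallP => x; apply/forallP => y.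
apply: (connect_sub _ (forallP (forallP conn x) y)) => a b /existsP [j /andP [_ ab]].
have [jk|jk] := eqVneq j k.
  have sym := sym_connect_sym (@adjG_sym (minus_edge k)).
  by move: ab; rewrite jk => /orP [] /andP [/eqP <- /eqP <-]; rewrite // sym.
by apply: connect1; apply/existsP; exists j; rewrite /minus_edge jk.
Qed.

Lemma lapf_minus_edge k f i : lapf (@allE m) f i =
  lapf (minus_edge k) f i + (L k)^-1 * dipole (pe k) (qe k) i * grad f k.
Proof. by rewrite !lapfE (bigD1 k) //= addrC. Qed.

Section Potentials.
Variable z : 'I_n.
Hypothesis conn : connected (@allE m).

Local Notation volt_z := (volt (@allE m) z).

Lemma volt_sym x y : volt_z x y = volt_z y x.
Proof.
have := dirichlet_dipole (volt_z y) (lapf_volt z x conn).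
have := dirichlet_dipole (volt_z x) (lapf_volt z y conn).
by rewrite !volt_ground !subr0 dirichletC => <- <-.
Qed.

Definition edge_volt k x := grad (volt_z x) k.

Lemma edge_voltE k x : edge_volt k x = volt_z (pe k) x - volt_z (qe k) x.
Proof. by rewrite /edge_volt /grad !(volt_sym x). Qed.

Lemma lapf_edge_volt k i : lapf (@allE m) (edge_volt k) i = dipole (pe k) (qe k) i.
Proof.
rewrite (eq_lapf _ _ (edge_voltE k)) lapfB !lapf_volt //.
by rewrite /dipole; ring.
Qed.

Lemma resistance_edge_volt x y : resistance pe qe L (@allE m) x y =
  \sum_k (L k)^-1 * (edge_volt k x - edge_volt k y) ^+ 2.
Proof.
have lap_w := lapf_volt y x conn.
rewrite -[resistance _ _ _ _ x y]/(volt (@allE m) y x x).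
have := dirichlet_dipole (volt (@allE m) y x) lap_w.
rewrite volt_ground subr0 => <-.
apply: eq_bigr => k _; rewrite -mulrA -expr2; congr (_ * _ ^+ 2).
rewrite /grad (lapf_inj (g := fun i => volt_z x i - volt_z y i) conn) //.
  by rewrite /edge_volt /grad; ring.
by move=> i; rewrite lap_w lapfB !lapf_volt // /dipole; ring.
Qed.

Lemma edge_volt_bounds k x :
  edge_volt k (qe k) <= edge_volt k x <= edge_volt k (pe k).
Proof.
rewrite (max_principle conn (lapf_edge_volt k)) andbT.
have lap_opp i : lapf (@allE m) (fun j => -1 * edge_volt k j) i = dipole (qe k) (pe k) i.
  by rewrite lapfZ lapf_edge_volt /dipole; ring.
by have := max_principle conn lap_opp x; rewrite !mulN1r lerN2.
Qed.

Definition half_drop k := (edge_volt k (pe k) - edge_volt k (qe k)) / 2.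
Definition centered_volt k x :=
  edge_volt k x - (edge_volt k (pe k) + edge_volt k (qe k)) / 2.

Lemma centered_volt_norm k x : `|centered_volt k x| <= half_drop k.
Proof.
have /andP [lo hi] := edge_volt_bounds k x.
by rewrite ler_norml /centered_volt /half_drop; apply/andP; split; lra.
Qed.

Lemma centered_volt_ends k :
  (exists i j, [/\ i != j, centered_volt k i = half_drop k
                         & centered_volt k j = - half_drop k])
  \/ half_drop k = 0.
Proof.
have [pq|pq] := eqVneq (pe k) (qe k).
  by right; rewrite /half_drop pq subrr mul0r.
by left; exists (pe k), (qe k); split; rewrite // /centered_volt /half_drop; field.
Qed.

Lemma sum_centered_volt_sqr x y :
  \sum_k (L k)^-1 * centered_volt k x ^+ 2 =
  \sum_k (L k)^-1 * centered_volt k y ^+ 2.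
Proof.
pose mid k := (edge_volt k (pe k) + edge_volt k (qe k)) / 2.
suff mid_sum x' : \sum_k (L k)^-1 * centered_volt k x' ^+ 2 =
                  \sum_k (L k)^-1 * mid k ^+ 2 by rewrite !mid_sum.
pose diag i := volt_z i i.
have grad_diag k : grad diag k = edge_volt k (pe k) + edge_volt k (qe k).
  by rewrite /diag /grad !edge_voltE (volt_sym (qe k) (pe k)); ring.
(* edgewise, centered^2 - mid^2 = grad V * (grad V - grad diag) for V the
   potential of source x'; both energies below equal V x' *)
have energy_eq : dirichlet (@allE m) (volt_z x') (volt_z x') =
                 dirichlet (@allE m) (volt_z x') diag.
  rewrite !(dirichlet_dipole _ (lapf_volt z x' conn)) /diag.
  by rewrite volt_ground volt_self.
apply/eqP; rewrite -subr_eq0 -sumrB; apply/eqP.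
rewrite -[RHS](subrr (dirichlet (@allE m) (volt_z x') (volt_z x'))).
rewrite {2}energy_eq /dirichlet -sumrB; apply: eq_bigr => k _.
rewrite grad_diag /centered_volt /mid -/(edge_volt k x'); field.
exact: lt0r_neq0.
Qed.

Lemma edge_volt_rescale k c f : c != 0 ->
  (forall i, lapf (@allE m) f i = c * dipole (pe k) (qe k) i) ->
  half_drop k = c^-1 * grad f k / 2 /\
  forall x, centered_volt k x = c^-1 * (f x - (f (pe k) + f (qe k)) / 2).
Proof.
move=> c0 lap_f.
have drop x y : edge_volt k x - edge_volt k y = c^-1 * f x - c^-1 * f y.
  apply: (lapf_inj (g := fun j => c^-1 * f j) conn) => i.
  by rewrite lapfZ lap_f lapf_edge_volt mulrA mulVf ?mul1r.
split; first by rewrite /half_drop drop /grad; field.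
move=> x; rewrite /centered_volt.
have -> : edge_volt k x - (edge_volt k (pe k) + edge_volt k (qe k)) / 2 =
    ((edge_volt k x - edge_volt k (pe k)) + (edge_volt k x - edge_volt k (qe k))) / 2.
  by field.
by rewrite !drop; field.
Qed.

Lemma yterm_non_bridge p k : connected (minus_edge k) ->
  yterm pe qe L p k = (L k)^-1 * (half_drop k ^+ 2 + 3 * centered_volt k p ^+ 2).
Proof.
move=> conn_k.
set a := volt (minus_edge k) (pe k) (qe k).
set b := volt (minus_edge k) (qe k) (pe k).
set Rk := b (pe k).
have a_pe : a (pe k) = 0 := volt_ground _ _ _.
have b_qe : b (qe k) = 0 := volt_ground _ _ _.
have lap_a := lapf_volt (pe k) (qe k) conn_k.
have lap_b := lapf_volt (qe k) (pe k) conn_k.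
have Rk_ge0 : 0 <= Rk.
  by have := dirichlet_ge0 (minus_edge k) b; rewrite (dirichlet_dipole b lap_b) b_qe subr0.
have a_qe : a (qe k) = Rk.
  have := lapf_inj (f := a) (g := fun i => -1 * b i) conn_k _ (qe k) (pe k).
  rewrite a_pe b_qe subr0 => ->; first by rewrite /Rk; ring.
  by move=> i; rewrite lap_a lapfZ lap_b /dipole; ring.
(* psi has Laplacian 2 dipole in Gamma - e_k, so in Gamma it is a multiple of
   the edge potential *)
pose psi i := b i - a i.
have LRk_gt0 : 0 < L k + Rk by rewrite ltr_wpDr.
have lap_psi i : lapf (@allE m) psi i = (2 + 2 * Rk / L k) * dipole (pe k) (qe k) i.
  rewrite (lapf_minus_edge k) lapfB lap_a lap_b /grad /psi a_qe.
  rewrite a_pe b_qe -/Rk /dipole; field.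
  exact: lt0r_neq0.
have c_gt0 : 0 < 2 + 2 * Rk / L k.
  by rewrite ltr_wpDr // divr_ge0 ?mulr_ge0 // ltW.
have [-> cv_psi] := edge_volt_rescale (lt0r_neq0 c_gt0) lap_psi.
rewrite cv_psi /yterm conn_k /= /grad /psi a_qe a_pe b_qe.
rewrite -[jhat _ _ _ _ (pe k) p (qe k)]/(a p) -[jhat _ _ _ _ (qe k) p (pe k)]/(b p).
rewrite -[resistance _ _ _ _ (pe k) (qe k)]/Rk.
have L_pos := L_gt0 k; rewrite -/Rk; clearbody psi Rk a b; field.
by apply/and3P; split; apply: lt0r_neq0; lra.
Qed.

Lemma yterm_bridge p k : ~~ connected (minus_edge k) ->
  yterm pe qe L p k = (L k)^-1 * (half_drop k ^+ 2 + 3 * centered_volt k p ^+ 2).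
Proof.
move=> disconn_k.
set e := adj (minus_edge k).
pose side x : R := (connect e (pe k) x)%:R.
have pq_disconn : connect e (pe k) (qe k) = false.
  by apply/negP => /(connectedG_minus_edge conn); apply/negP.
have side_edge j : j != k -> side (pe j) = side (qe j).
  move=> jk; have edge_j : e (pe j) (qe j).
    by apply/existsP; exists j; rewrite /minus_edge jk !eqxx.
  have := connect_closed (sym_connect_sym (@adjG_sym (minus_edge k))) (pe k) edge_j.
  by rewrite /side !inE => ->.
have lap_side i :
    lapf (@allE m) side i = (L k)^-1 * dipole (pe k) (qe k) i.
  rewrite (lapf_minus_edge k) lapfE big1 ?add0r => [|j jk]; last first.
    by rewrite /grad side_edge // subrr mulr0.
  by rewrite /grad /side pq_disconn connect0 subr0 mulr1 mulrC.
have L_pos := L_gt0 k.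
have [-> cv_side] := edge_volt_rescale (invr_neq0 (lt0r_neq0 L_pos)) lap_side.
rewrite cv_side /yterm (negPf disconn_k) /grad /side pq_disconn connect0 invrK.
by case: (connect e (pe k) p) => /=; field; apply: lt0r_neq0.
Qed.

Lemma yterm_centered_volt p k :
  yterm pe qe L p k = (L k)^-1 * (half_drop k ^+ 2 + 3 * centered_volt k p ^+ 2).
Proof.
by have [/yterm_non_bridge|/yterm_bridge] := boolP (connected (minus_edge k)).
Qed.

Lemma Kf_centered_volt : Kf pe qe L =
  \sum_k (L k)^-1 *
    (n%:R * \sum_x centered_volt k x ^+ 2 - (\sum_x centered_volt k x) ^+ 2).
Proof.
have edge_sums : \sum_x \sum_y resistance pe qe L (@allE m) x y =
    \sum_k (L k)^-1 * \sum_x \sum_y (centered_volt k x - centered_volt k y) ^+ 2.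
  under eq_bigr => x _ do under eq_bigr => y _ do rewrite resistance_edge_volt.
  under eq_bigr => x _ do rewrite exchange_big /=.
  rewrite exchange_big /=; apply: eq_bigr => k _.
  rewrite big_distrr /=; apply: eq_bigr => x _.
  rewrite big_distrr /=; apply: eq_bigr => y _.
  by rewrite /centered_volt; congr (_ * _ ^+ 2); ring.
rewrite /Kf edge_sums big_distrr /=; apply: eq_bigr => k _.
by rewrite sum_sqr_diff card_ord; field; apply: lt0r_neq0.
Qed.

Lemma yG_centered_volt p : yG pe qe L p =
  \sum_k (L k)^-1 * (half_drop k ^+ 2 + 3 / n%:R * \sum_x centered_volt k x ^+ 2).
Proof.
have n_neq0 : n%:R != 0 :> R by rewrite pnatr_eq0 -lt0n (leq_ltn_trans _ (ltn_ord p)).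
have avg : \sum_k (L k)^-1 * \sum_x centered_volt k x ^+ 2 =
           n%:R * \sum_k (L k)^-1 * centered_volt k p ^+ 2.
  under eq_bigr do rewrite big_distrr.
  rewrite exchange_big /=; under eq_bigr do rewrite (sum_centered_volt_sqr _ p).
  by rewrite sumr_const card_ord mulr_natl.
have split_sum c (f g : 'I_m -> R) : \sum_k (L k)^-1 * (f k + c * g k) =
    \sum_k (L k)^-1 * f k + c * \sum_k (L k)^-1 * g k.
  by rewrite big_distrr -big_split; apply: eq_bigr => k _ /=; ring.
rewrite /yG (eq_bigr _ (fun k _ => yterm_centered_volt p k)).
rewrite (split_sum 3 (fun k => half_drop k ^+ 2) (fun k => centered_volt k p ^+ 2)).
rewrite (split_sum (3 / n%:R) (fun k => half_drop k ^+ 2)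
                  (fun k => \sum_x centered_volt k x ^+ 2)).
by rewrite avg; field.
Qed.

End Potentials.

End Laplacian.

Theorem proposition3p17 (R : realType) (n m : nat)
    (pe qe : 'I_m -> 'I_n) (L : 'I_m -> R) :
  (forall k, 0 < L k) ->
  connectedG pe qe (@allE m) ->
  (4 <= n)%N ->
  forall p : 'I_n,
    (n%:R - 1) * yG pe qe L p <= Kf pe qe L /\
    Kf pe qe L <= (n%:R ^+ 2 - 3 * n%:R + 4) / 2 * yG pe qe L p.
Proof.
move=> L_gt0 conn n4 p.
rewrite (Kf_centered_volt L_gt0 p conn) (yG_centered_volt L_gt0 p conn p).
have card4 : (4 <= #|'I_n|)%N by rewrite card_ord.
have edge_bounds k := variance_bounds card4 (centered_volt_norm L_gt0 p conn k)
  (centered_volt_ends pe qe L p k).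
rewrite card_ord in edge_bounds.
have inv_ge0 k : 0 <= (L k)^-1 by rewrite invr_ge0 ltW.
split; rewrite mulr_sumr; apply: ler_sum => k _; rewrite mulrCA;
  by apply: ler_wpM2l => //; case: (edge_bounds k).
Qed.
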